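(* Let $W(x,y,z)\in F(x,y,z)$ be such that for every group $G$ and every $c\in G$ the operation $*_{W,c}$ satisfies the quandle axioms (q1) and (q2). Then there exist $w(y,z)\in F(y,z)$ and $\varepsilon\in\{1,-1\}$ such that $$W(x,y,z)=y\,w(y,z)^{-1}\,y^{-\varepsilon}\,x^{\varepsilon}\,w(y,z).$$
   Context: Quandle axioms for a binary operation $*$ on a set $Q$: (q1) $x*x=x$ for all $x\in Q$; (q2) for every $x\in Q$ the map $y\mapsto y*x$ is a bijection of $Q$. For a word $W(x,y,z)$ in the free group $F(x,y,z)$, a group $G$ and a fixed element $c\in G$, the binary operation $*_{W,c}$ on $G$ is defined by $a*_{W,c}b=W(a,b,c)$. $F(y,z)$ denotes the free group on $y,z$, viewed as a subgroup of $F(x,y,z)$. *)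

From mathcomp Require Import all_boot all_algebra.
Set Implicit Arguments. Unset Strict Implicit. Unset Printing Implicit Defensive.

Record group := Group {
  gcar :> Type;
  gmul : gcar -> gcar -> gcar;
  gone : gcar;
  ginv : gcar -> gcar;
  gmulA : forall a b c, gmul a (gmul b c) = gmul (gmul a b) c;
  gmul1 : forall a, gmul gone a = a;
  gmulV : forall a, gmul (ginv a) a = gone
}.

Inductive gen3 := gx | gy | gz.

Definition gen3_eqb (a b : gen3) : bool :=
  match a, b with gx, gx | gy, gy | gz, gz => true | _, _ => false end.

(* a letter is a generator together with an exponent sign:
   (g, false) stands for g, (g, true) stands for g^{-1} *)
Definition letter := (gen3 * bool)%type.
Definition word := seq letter.

Definition push (l : letter) (s : word) : word :=
  match s with
  | h :: t => if gen3_eqb h.1 l.1 && (h.2 != l.2) then t else l :: s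
  | [::] => [:: l]
  end.

(* the reduced form of a word; two words define the same element of the
   free group F(x,y,z) iff their reduced forms coincide *)
Definition reduce (w : word) : word := foldr push [::] w.

Definition feq (u v : word) : Prop := reduce u = reduce v.

Definition winv (w : word) : word := rev (map (fun l => (l.1, ~~ l.2)) w).

Definition wgpow (g : gen3) (eps : int) : word :=
  if eps == 1%R then [:: (g, false)] else [:: (g, true)].

Definition in_Fyz (w : word) : bool := all (fun l => ~~ gen3_eqb l.1 gx) w.

Definition gassign (G : group) (a b c : G) (g : gen3) : G :=
  match g with gx => a | gy => b | gz => c end.

Definition weval (G : group) (W : word) (a b c : G) : G :=
  foldr (fun l acc => gmul (if l.2 then ginv (gassign a b c l.1)
                                     else gassign a b c l.1) acc)
        (gone G) W.

Definition wop (G : group) (W : word) (c : G) : G -> G -> G :=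
  fun a b => weval W a b c.

Definition quandle_q1 (Q : Type) (op : Q -> Q -> Q) : Prop :=
  forall x, op x x = x.
Definition quandle_q2 (Q : Type) (op : Q -> Q -> Q) : Prop :=
  forall x, bijective (fun y => op y x).

From Pilot Require Import Defs.
From HB Require Import structures.
From mathcomp Require Import all_boot all_algebra zify.
From mathcomp Require fingroup perm.
Set Implicit Arguments. Unset Strict Implicit. Unset Printing Implicit Defensive.

(* Axiom (q2) with c = z, read in the free group F(x,y,z), makes the map
   u |-> W(u,y,z) a bijection; if W(v,y,z) = x, applying the endomorphism
   x |-> W(x,y,z) to this equation and cancelling gives v(W,y,z) = x.  So in
   every group x lies in the subgroup generated by W, y and z.  In particular
   W involves x; write its reduced form as u C v with u, v in F(y,z) and C
   beginning and ending with x^(+-1).  Then C is a single letter: otherwise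
   C = P D P^-1 with D cyclically reduced, and the Stallings graph of
   <y, z, C> (a lasso reading P and then the cycle D, with y- and z-loops at
   the base point) completes to a permutation representation in which y, z
   and W fix the base point while x moves it.  Finally W = u x^e v, and (q1)
   at x = y gives u y^e v = y, that is u = y v^-1 y^-e. *)

Lemma gen3_eqP : Equality.axiom gen3_eqb.
Proof. by do 2!case; constructor. Qed.
HB.instance Definition _ := hasDecEq.Build gen3 gen3_eqP.

Definition linv (l : letter) : letter := (l.1, ~~ l.2).

Lemma linvK : involutive linv.
Proof. by case=> g e; rewrite /linv negbK. Qed.

Lemma linv_neq l : linv l != l.
Proof. by case: l => g []; rewrite /linv xpair_eqE andbF. Qed.

Lemma winv_cons l w : winv (l :: w) = rcons (winv w) (linv l).
Proof. exact: rev_cons. Qed.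

(** * Reduced words *)

Definition reduced (w : word) : bool :=
  if w is a :: t then path (fun a b => b != linv a) a t else true.

Lemma reduced_catl u v : reduced (u ++ v) -> reduced u.
Proof. by case: u => //= a u; rewrite cat_path => /andP[]. Qed.

Lemma reduced_catr u v : reduced (u ++ v) -> reduced v.
Proof.
by case: u => //= a u; rewrite cat_path => /andP[_]; case: v => //= b v /andP[].
Qed.

Lemma reduced_nth l0 w i :
  reduced w -> i.+1 < size w -> nth l0 w i.+1 != linv (nth l0 w i).
Proof. by case: w => //= a w /(pathP l0); apply. Qed.

Lemma push_cons l h t : push l (h :: t) = if h == linv l then t else l :: h :: t.
Proof.
case: h l => g e [g' e'] /=; rewrite /linv xpair_eqE /=.
by have -> : gen3_eqb g g' = (g == g') by []; case: e e'.
Qed.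

Lemma reduced_push l w : reduced w -> reduced (push l w).
Proof.
case: w => [|h t] // Hw; rewrite push_cons; case: ifP => [_|/negbT Ehl].
  by case: t Hw => //= h' t /andP[].
by rewrite /= Ehl.
Qed.

Lemma reduce_reduced w : reduced (reduce w).
Proof. by elim: w => //= l w; apply: reduced_push. Qed.

Lemma reducedK w : reduced w -> reduce w = w.
Proof.
elim: w => //= a t IH Hr; rewrite IH; last exact: (@reduced_catr [:: a]).
by case: t Hr {IH} => // b t /andP[Hab _]; rewrite push_cons (negbTE Hab).
Qed.

Lemma push_linvK l w : reduced w -> push (linv l) (push l w) = w.
Proof.
case: w => [|h t] Hw; first by rewrite [push l _]/= push_cons linvK eqxx.
rewrite push_cons; case: ifP => [/eqP Eh|_]; last by rewrite push_cons linvK eqxx.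
by case: t Hw => [|h' t /andP[Hh' _]]; rewrite ?push_cons -Eh ?(negbTE Hh').
Qed.

Lemma reduce_cat u v : reduce (u ++ v) = foldr push (reduce v) u.
Proof. exact: foldr_cat. Qed.

Lemma reduced_foldr s u : reduced s -> reduced (foldr push s u).
Proof. by move=> Hs; elim: u => //= l u; apply: reduced_push. Qed.

Lemma foldr_push s l u :
  reduced s -> foldr push s (push l u) = push l (foldr push s u).
Proof.
move=> Hs; case: u => [|h t] //; rewrite push_cons; case: ifP => // /eqP ->.
by rewrite /= -{1}(linvK l) push_linvK // reduced_foldr.
Qed.

Lemma reduce_catl u v : reduce (reduce u ++ v) = reduce (u ++ v).
Proof.
rewrite !reduce_cat; elim: u => //= l u <-.
by rewrite foldr_push // reduce_reduced.
Qed.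

Lemma reduce_catr u v : reduce (u ++ reduce v) = reduce (u ++ v).
Proof. by rewrite !reduce_cat reducedK // reduce_reduced. Qed.

Lemma reduce_winvl u : reduce (winv u ++ u) = [::].
Proof.
rewrite reduce_cat; elim: u => //= l u IH.
rewrite winv_cons -cats1 foldr_cat /= push_linvK ?IH //.
exact: reduce_reduced.
Qed.

(** * The free group on x, y, z *)

Definition free_elt := {w : word | reduced w}.

Definition free_mul (u v : free_elt) : free_elt :=
  exist _ (reduce (val u ++ val v)) (reduce_reduced _).
Definition free_inv (u : free_elt) : free_elt :=
  exist _ (reduce (winv (val u))) (reduce_reduced _).
Definition free_one : free_elt := exist _ [::] isT.

Lemma free_mulA u v w : free_mul u (free_mul v w) = free_mul (free_mul u v) w.
Proof. by apply: val_inj; rewrite /= reduce_catr reduce_catl catA. Qed.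

Lemma free_mul1 u : free_mul free_one u = u.
Proof. by apply: val_inj; rewrite /= reducedK //; case: u. Qed.

Lemma free_mulV u : free_mul (free_inv u) u = free_one.
Proof. by apply: val_inj; rewrite /= reduce_catl reduce_winvl. Qed.

Definition free_group : group := Defs.Group free_mulA free_mul1 free_mulV.

Definition free_gen (g : gen3) : free_group := exist _ [:: (g, false)] isT.

Section GroupTheory.
Variable G : group.
Implicit Types a b c : G.

Lemma gmulgV a : gmul a (ginv a) = gone G.
Proof.
have E : gmul (ginv a) (gmul a (ginv a)) = ginv a by rewrite gmulA gmulV gmul1.
by rewrite -[gmul a _]gmul1 -(gmulV (ginv a)) -gmulA E gmulV.
Qed.

Lemma gmulg1 a : gmul a (gone G) = a.
Proof. by rewrite -(gmulV a) gmulA gmulgV gmul1. Qed.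

Lemma ginv_unique a b : gmul b a = gone G -> b = ginv a.
Proof. by move=> E; rewrite -[b]gmulg1 -(gmulgV a) gmulA E gmul1. Qed.

Lemma ginvK a : ginv (ginv a) = a.
Proof. by apply/esym/ginv_unique; rewrite gmulgV. Qed.

Lemma gmul_solvel a b c d :
  gmul a (gmul b c) = d -> a = gmul d (gmul (ginv c) (ginv b)).
Proof. by move<-; rewrite -!gmulA (gmulA c) gmulgV gmul1 gmulgV gmulg1. Qed.

End GroupTheory.

(** * Evaluation of words *)

Section Evaluation.
Variables (G : group) (a b c : G).

Definition lval (l : letter) : G :=
  if l.2 then ginv (gassign a b c l.1) else gassign a b c l.1.

Lemma weval_cons l w : weval (l :: w) a b c = gmul (lval l) (weval w a b c).
Proof. by []. Qed.

Lemma weval_cat u v : weval (u ++ v) a b c = gmul (weval u a b c) (weval v a b c).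
Proof. by elim: u => [|l u IH] /=; rewrite ?gmul1 // IH gmulA. Qed.

Lemma lval_linv l : lval (linv l) = ginv (lval l).
Proof. by case: l => g [] //; rewrite /lval /= ginvK. Qed.

Lemma weval_push l w : weval (push l w) a b c = gmul (lval l) (weval w a b c).
Proof.
case: w => [|h t] //; rewrite push_cons; case: ifP => // /eqP ->.
by rewrite weval_cons lval_linv gmulA gmulgV gmul1.
Qed.

Lemma weval_reduce w : weval (reduce w) a b c = weval w a b c.
Proof. by elim: w => //= l w IH; rewrite weval_push IH. Qed.

Lemma weval_winv w : weval (winv w) a b c = ginv (weval w a b c).
Proof. by apply: ginv_unique; rewrite -weval_cat -weval_reduce reduce_winvl. Qed.

Definition free_eval (u : free_group) : G := weval (val u) a b c.

Lemma free_eval_mul u v : free_eval (gmul u v) = gmul (free_eval u) (free_eval v).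
Proof. by rewrite /free_eval /= weval_reduce weval_cat. Qed.

Lemma free_eval_inv u : free_eval (ginv u) = ginv (free_eval u).
Proof. by rewrite /free_eval /= weval_reduce weval_winv. Qed.

Lemma free_eval_gen g : free_eval (free_gen g) = gassign a b c g.
Proof. exact: gmulg1. Qed.

End Evaluation.

Lemma free_eval_weval (G : group) (a b c : G) w u v t :
  free_eval a b c (weval w u v t) =
  weval w (free_eval a b c u) (free_eval a b c v) (free_eval a b c t).
Proof.
elim: w => // l w IH; rewrite !weval_cons free_eval_mul IH; congr gmul.
by case: l => -[] []; rewrite /lval //= free_eval_inv.
Qed.

Lemma weval_Fyz (G : group) (a a' b c : G) w :
  in_Fyz w -> weval w a b c = weval w a' b c.
Proof.
elim: w => // -[g e] w IH /andP[Hg /IH Hw]; rewrite !weval_cons Hw.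
by case: g Hg.
Qed.

Notation fx := (free_gen gx).
Notation fy := (free_gen gy).
Notation fz := (free_gen gz).

Lemma val_weval_free w : val (weval w fx fy fz) = reduce w.
Proof.
elim: w => //= l w IH; rewrite IH reduce_catr.
by case: l => -[] [].
Qed.

Lemma feq_weval u v : feq u v <-> weval u fx fy fz = weval v fx fy fz.
Proof.
rewrite /feq -!val_weval_free; split=> [|-> //]; exact: val_inj.
Qed.

(** * Consequences of the quandle axioms *)

Lemma q2_inverse_word W :
  (forall (G : group) (c : G), quandle_q2 (wop W c)) ->
  exists V : word, forall (G : group) (a b c : G), weval V (weval W a b c) b c = a.
Proof.
move=> q2; have [g gK Kg] := q2 free_group fz fy.
set Wx := weval W fx fy fz.
have Vx : weval (val (g fx)) Wx fy fz = fx.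
  apply: (can_inj gK); rewrite /wop.
  transitivity (free_eval Wx fy fz (weval W (g fx) fy fz)).
    by rewrite free_eval_weval !free_eval_gen.
  by move: (Kg fx); rewrite /wop => ->; rewrite free_eval_gen.
exists (val (g fx)) => G a b c.
have := congr1 (free_eval a b c) Vx.
by rewrite free_eval_weval free_eval_weval !free_eval_gen.
Qed.

Lemma q2_has_x W :
  (forall (G : group) (c : G), quandle_q2 (wop W c)) -> ~~ in_Fyz W.
Proof.
move=> /q2_inverse_word [V HV]; apply/negP => W_Fyz.
have := HV free_group fx fy fz; rewrite (@weval_Fyz _ fx fy) // HV.
by move/(congr1 val).
Qed.

Lemma q1_single_x W u0 e un :
  (forall (G : group) (c : G), quandle_q1 (wop W c)) ->
  W = u0 ++ (gx, e) :: un -> in_Fyz u0 -> in_Fyz un ->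
  feq W ((gy, false) :: winv un ++ (gy, ~~ e) :: (gx, e) :: un).
Proof.
move=> q1 EW u0_Fyz un_Fyz; apply/feq_weval.
rewrite EW weval_cons !weval_cat weval_winv !weval_cons.
have := q1 free_group fz fy; rewrite /wop EW weval_cat weval_cons.
rewrite !(@weval_Fyz _ fy fx) // => /gmul_solvel ->.
have -> : lval fx fy fz (gy, ~~ e) = ginv (lval fx fy fz (gy, e)) by rewrite -lval_linv.
by rewrite -!gmulA.
Qed.

(* Writes C = P D P^-1 with P = take p Q and D = drop p Q cyclically reduced;
   the last condition says that D P^-1 does not cancel either. *)
Lemma reduced_lasso_split C : reduced C -> C != [::] ->
  exists Q p, [/\ C = Q ++ winv (take p Q), p < size Q,
    nth (gx, false) Q (size Q).-1 != linv (nth (gx, false) Q p) &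
    (0 < p -> nth (gx, false) Q (size Q).-1 != nth (gx, false) Q p.-1)].
Proof.
elim: {C}_.+1 {-2}C (ltnSn (size C)) => // k IH [|a C] // ltCk Cred _.
case/lastP: C => [|C b] in ltCk Cred *.
  by exists [:: a], 0; rewrite /= eq_sym linv_neq.
have [Eb | Nb] := eqVneq b (linv a); last first.
  exists (a :: rcons C b), 0; rewrite take0 cats0.
  by split=> //=; rewrite size_rcons /= nth_rcons ltnn eqxx.
subst b.
have C_red : reduced C.
  by apply: (@reduced_catl _ [:: linv a]); rewrite cats1; apply: (@reduced_catr [:: a]).
have C_nz : C != [::] by case: C Cred {ltCk C_red} => //=; rewrite eqxx.
have [|Q [p [EC p_lt cyc join]]] := IH C _ C_red C_nz.
  by move: ltCk; rewrite /= size_rcons; lia.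
have lastQ : nth (gx, false) (a :: Q) (size Q) = nth (gx, false) Q (size Q).-1.
  by case: Q p_lt {EC cyc join}.
exists (a :: Q), p.+1; split=> //=; rewrite ?lastQ //.
  by rewrite winv_cons EC rcons_cat.
move=> _; case: p => [|p] in EC p_lt cyc join *; last exact: join.
have := reduced_nth (gx, false) Cred (i := size Q); rewrite EC take0 cats0 /= size_rcons.
rewrite -rcons_cons !nth_rcons ltnn eqxx /= lastQ ltnSn => /(_ isT).
by rewrite ifT //; apply: contra => /eqP ->.
Qed.

(** * Permutation representations *)

Definition edge := (nat * letter * nat)%type.
Definition edge_rev (e : edge) : edge := (e.2, linv e.1.2, e.1.1).
Definition undirected (F : seq edge) : seq edge := F ++ map edge_rev F.

Lemma undirected_rev F a l b :
  (a, l, b) \in undirected F -> (b, linv l, a) \in undirected F.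
Proof.
have edge_revK : involutive edge_rev by case=> [[a' l'] b']; rewrite /edge_rev /= linvK.
rewrite -[(b, _, a)]/(edge_rev (a, l, b)) !mem_cat => /orP[E | /mapP[e E ->]].
  by rewrite (map_f edge_rev E) orbT.
by rewrite edge_revK E.
Qed.

Section PermutationRepresentations.
Import fingroup perm.
Local Open Scope group_scope.

Definition perm_group (T : finType) : Defs.group :=
  @Defs.Group {perm T} _ _ _ (@mulgA _) (@mul1g _) (@mulVg _).
Canonical perm_group.

Lemma lval_fix (T : finType) (X Y Z : {perm T}) om l :
  gassign X Y Z l.1 om = om -> lval X Y Z l om = om.
Proof. by case: l => g [] //= E; rewrite /lval /= -{1}E permK. Qed.

Lemma weval_fix (T : finType) (X Y Z : {perm T}) om w :
  X om = om -> Y om = om -> Z om = om -> weval w X Y Z om = om.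
Proof.
move=> HX HY HZ; elim: w => [|l w IH]; first exact: perm1.
by rewrite weval_cons permM lval_fix //; case: l.1.
Qed.

(* In {perm T}, (s * t) x = t (s x): a word acts by its letters from left to
   right, following a path in a graph labelled by letters. *)
Lemma weval_walk (T : finType) (X Y Z : {perm T}) (f : nat -> T) w :
  (forall i, i < size w ->
     lval X Y Z (nth (gx, false) w i) (f i) = f i.+1) ->
  weval w X Y Z (f 0) = f (size w).
Proof.
elim: w f => [|l w IH] f Hf; first exact: perm1.
by rewrite weval_cons permM (Hf 0) // (IH (f \o succn)) // => i Hi; exact: (Hf i.+1).
Qed.

(* Such a representation shows that x is not in the subgroup generated by
   y, z and W. *)
Definition x_notin_subgroup (W : word) : Prop :=
  exists (T : finType) (X Y Z : {perm T}) (om : T),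
    [/\ Y om = om, Z om = om, weval W X Y Z om = om & X om != om].

Lemma q2_x_in_subgroup W :
  (forall (G : Defs.group) (c : G), quandle_q2 (wop W c)) -> ~ x_notin_subgroup W.
Proof.
move=> /q2_inverse_word [V HV] [T [X [Y [Z [om [HY HZ HW]]]]]].
by rewrite -(HV (perm_group T) X Y Z) weval_fix ?eqxx.
Qed.

Lemma x_notin_subgroup_Fyz u C v :
  in_Fyz u -> in_Fyz v -> x_notin_subgroup C -> x_notin_subgroup (u ++ C ++ v).
Proof.
move=> u_Fyz v_Fyz [T [X [Y [Z [om [HY HZ HC HX]]]]]].
exists T, X, Y, Z, om; split=> //.
rewrite !weval_cat !permM (@weval_Fyz _ X Y _ _ u) // (@weval_Fyz _ X Y _ _ v) //.
by rewrite (weval_fix u HY HY HZ) HC (weval_fix v HY HY HZ).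
Qed.

Lemma perm_extend (T : finType) (L : seq (T * T)) :
  {in L &, forall p q, (p.1 == q.1) = (p.2 == q.2)} ->
  exists s : {perm T}, {in L, forall p, s p.1 = p.2}.
Proof.
elim: L => [|p L IH] HL; first by exists 1.
have [s Hs] : exists s : {perm T}, {in L, forall q, s q.1 = q.2}.
  by apply: IH => q r Hq Hr; apply: HL; rewrite inE ?Hq ?Hr orbT.
have Hp : p \in p :: L := mem_head p L.
exists (s * tperm (s p.1) p.2) => q; rewrite inE => /predU1P[-> | qL].
  by rewrite permM tpermL.
have Hq : q \in p :: L by rewrite inE qL orbT.
have [Eqp | Npq] := eqVneq q.1 p.1.
  by rewrite Eqp permM tpermL; apply/esym/eqP; rewrite -(HL _ _ Hq Hp) Eqp.
rewrite permM (Hs q qL) tpermD //; first by rewrite -(Hs q qL) (inj_eq perm_inj) eq_sym.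
by rewrite eq_sym -(HL _ _ Hq Hp).
Qed.

Section Realization.
Variables (N : nat) (F : seq edge).
Hypothesis F_bound : forall a l b, (a, l, b) \in undirected F -> b <= N.
Hypothesis F_det :
  forall a l b b', (a, l, b) \in undirected F -> (a, l, b') \in undirected F -> b = b'.

Lemma label_perm g : exists s : {perm 'I_N.+1},
  forall a b, (a, (g, false), b) \in undirected F -> s (inord a) = inord b.
Proof.
have inord_eq a b : a <= N -> b <= N -> (inord a == inord b :> 'I_N.+1) = (a == b).
  by move=> Ha Hb; apply/eqP/eqP => [E|->] //; rewrite -(inordK Ha) -(inordK Hb) E.
have src_bound a l b : (a, l, b) \in undirected F -> a <= N.
  by move/undirected_rev/F_bound.
pose L : seq ('I_N.+1 * 'I_N.+1) :=
  [seq (inord e.1.1, inord e.2) | e <- undirected F & e.1.2 == (g, false)].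
have [s Hs] : exists s : {perm 'I_N.+1}, {in L, forall p, s p.1 = p.2}.
  apply: perm_extend => _ _ /mapP[[[a l] b] + ->] /mapP[[[a' l'] b'] + ->] /=.
  rewrite !mem_filter /= => /andP[/eqP El Eab] /andP[/eqP El' Eab']; subst l l'.
  rewrite !inord_eq; try by [apply: src_bound Eab | apply: src_bound Eab'
                            | apply: F_bound Eab | apply: F_bound Eab'].
  apply/eqP/eqP => [Ea|Eb]; [rewrite Ea in Eab | rewrite Eb in Eab].
    exact: F_det Eab Eab'.
  exact: F_det (undirected_rev Eab) (undirected_rev Eab').
exists s => a b Eab; apply: (Hs (inord a, inord b)).
by apply/mapP; exists (a, (g, false), b); rewrite ?mem_filter ?eqxx.
Qed.

Lemma realize_graph : exists X Y Z : {perm 'I_N.+1},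
  forall a l b, (a, l, b) \in undirected F -> lval X Y Z l (inord a) = inord b.
Proof.
have [sx Hx] := label_perm gx; have [sy Hy] := label_perm gy.
have [sz Hz] := label_perm gz.
have Hg g a b :
    (a, (g, false), b) \in undirected F -> gassign sx sy sz g (inord a) = inord b.
  by case: g; [apply: Hx | apply: Hy | apply: Hz].
exists sx, sy, sz => a [g []] b Eab; last exact: Hg.
by rewrite /lval /= -(Hg _ _ _ (undirected_rev Eab)) permK.
Qed.

End Realization.

Section Lasso.
Variables (Q : word) (p : nat).
Local Notation n := (size Q).
Local Notation q i := (nth (gx, false) Q i).

(* The Stallings graph of the subgroup generated by y, z and
   Q (take p Q)^-1: a path 0, 1, ..., n-1 reading Q, closed by an edge from
   n-1 back to p, with y- and z-loops at the base point 0. *)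
Definition lasso_next i := if i.+1 < n then i.+1 else p.

Definition lasso_edges : seq edge :=
  [seq (i, q i, lasso_next i) | i <- iota 0 n] ++
  [:: (0, (gy, false), 0); (0, (gz, false), 0)].

Hypothesis Q_reduced : reduced Q.
Hypothesis n_gt1 : 1 < n.
Hypothesis p_lt_n : p < n.
Hypothesis Q_cyclic : q n.-1 != linv (q p).
Hypothesis Q_junction : 0 < p -> q n.-1 != q p.-1.
Hypothesis Q_head : (q 0).1 = gx.
Hypothesis Q_last : p = 0 -> (q n.-1).1 = gx.

Lemma lasso_next_lt i : lasso_next i < n.
Proof. by rewrite /lasso_next; case: ifP. Qed.

Lemma lasso_edgesP a l b : (a, l, b) \in undirected lasso_edges ->
  [\/ exists2 i, i < n & [/\ a = i, l = q i & b = lasso_next i],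
      exists2 i, i < n & [/\ a = lasso_next i, l = linv (q i) & b = i]
    | [/\ a = 0, b = 0 & l.1 != gx]].
Proof.
have fwdP e : e \in lasso_edges ->
    (exists2 i, i < n & e = (i, q i, lasso_next i)) \/
    [/\ e.1.1 = 0, e.2 = 0 & e.1.2.1 != gx].
  rewrite mem_cat => /orP[/mapP[i] | ].
    by rewrite mem_iota => Hi ->; left; exists i.
  by rewrite !inE => /orP[] /eqP ->; right.
rewrite mem_cat => /orP[/fwdP[[i Hi [-> -> ->]] | [/= -> -> Hl]] | ].
- by apply: Or31; exists i.
- exact: Or33.
move=> /mapP[[[a' l'] b'] /fwdP[[i Hi [-> -> ->]] | [/= -> -> Hl]] [-> -> ->]].
  by apply: Or32; exists i.
exact: Or33.
Qed.

Lemma lasso_fwd_rev i j : i < n -> j < n -> i = lasso_next j -> q i != linv (q j).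
Proof.
rewrite /lasso_next => Hi Hj; case: ifP => [Hj1 -> | Hj1 ->].
  exact: reduced_nth.
have -> : j = n.-1 by move: Hj1 => /negbT; lia.
by apply: contra Q_cyclic => /eqP ->; rewrite linvK.
Qed.

Lemma lasso_rev_inj i j :
  i < n -> j < n -> lasso_next i = lasso_next j -> q i = q j -> i = j.
Proof.
have join k l : l < n -> ~~ (l.+1 < n) -> k.+1 = p -> q k = q l -> False.
  move=> Hl Hl1 Ekp Eq; have El : l = n.-1 by lia.
  by move: Q_junction; rewrite -Ekp /= Eq El eqxx => /(_ isT).
rewrite /lasso_next => Hi Hj; case: ifP; case: ifP => Hj1 Hi1 E Eq.
- by case: E.
- by case: (join _ _ Hj (negbT Hj1) E Eq).
- by case: (join _ _ Hi (negbT Hi1) (esym E) (esym Eq)).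
- by move: Hi1 Hj1 => /negbT Hi1 /negbT Hj1; lia.
Qed.

Lemma lasso_next_eq0 j : j < n -> lasso_next j = 0 -> p = 0 /\ j = n.-1.
Proof. by rewrite /lasso_next => Hj; case: ifP => // /negbT; lia. Qed.

(* Two equally labelled edges out of one vertex would be a cancellation inside
   Q, between its last and p-th letters (Q_cyclic) or its last and (p-1)-th
   letters (Q_junction), or an x-edge at 0 meeting a y- or z-loop. *)
Lemma lasso_edges_det a l b b' : (a, l, b) \in undirected lasso_edges ->
  (a, l, b') \in undirected lasso_edges -> b = b'.
Proof.
have rev_loop j : j < n -> lasso_next j = 0 -> (linv (q j)).1 != gx -> False.
  by move=> Hj /(lasso_next_eq0 Hj) [/Q_last Ep ->]; rewrite /linv /= Ep eqxx.
move=> /lasso_edgesP E1 /lasso_edgesP E2.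
case: E1 E2 => [[i Hi [-> -> ->]] | [i Hi [-> -> ->]] | [-> -> Hl]];
case=> [[j Hj [Ea El ->]] | [j Hj [Ea El ->]] | [Ea -> Hl']].
- by rewrite Ea.
- by move: (lasso_fwd_rev Hi Hj Ea); rewrite El eqxx.
- by move: Hl'; rewrite Ea Q_head.
- by move: (lasso_fwd_rev Hj Hi (esym Ea)); rewrite -El eqxx.
- by apply: lasso_rev_inj => //; apply: (can_inj linvK).
- by case: (rev_loop _ Hi Ea Hl').
- by move: Hl; rewrite El -Ea Q_head.
- by case: (rev_loop _ Hj (esym Ea)); rewrite -El.
- by [].
Qed.

Lemma lasso_edges_bound a l b : (a, l, b) \in undirected lasso_edges -> b <= n.-1.
Proof.
case/lasso_edgesP=> [[i _ [_ _ ->]] | [i Hi [_ _ ->]] | [_ -> _]] //; last by lia.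
by have := lasso_next_lt i; lia.
Qed.

Lemma lasso_x_notin_subgroup : x_notin_subgroup (Q ++ winv (take p Q)).
Proof.
have [X [Y [Z HE]]] := realize_graph lasso_edges_bound lasso_edges_det.
have path_edge i : i < n -> (i, q i, lasso_next i) \in undirected lasso_edges.
  by move=> Hi; rewrite !mem_cat (map_f (fun i => (i, q i, lasso_next i))) ?mem_iota.
have loop_edge g : g != gx -> (0, (g, false), 0) \in undirected lasso_edges.
  by case: g => // _; rewrite !mem_cat !inE eqxx ?orbT.
pose f k : 'I_n.-1.+1 := inord (if k < n then k else p).
have step i : i < n -> lval X Y Z (q i) (f i) = f i.+1.
  by move=> Hi; rewrite /f Hi; apply: HE; apply: path_edge.
have walk_Q : weval Q X Y Z (f 0) = f n by apply: weval_walk.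
have walk_P : weval (take p Q) X Y Z (f 0) = f p.
  have size_P : size (take p Q) = p by rewrite size_take p_lt_n.
  rewrite -{2}size_P; apply: weval_walk => i; rewrite size_P => Hi.
  by rewrite nth_take // step //; lia.
have f0 : f 0 = inord 0 by rewrite /f ifT //; lia.
exists _, X, Y, Z, (inord 0); split.
- exact: (HE _ _ _ (loop_edge gy isT)).
- exact: (HE _ _ _ (loop_edge gz isT)).
- have fn : f n = f p by rewrite /f ltnn p_lt_n.
  by rewrite weval_cat weval_winv permM -f0 walk_Q fn -walk_P permK.
apply/eqP => X0.
have := HE _ _ _ (@path_edge 0 (ltnW n_gt1)); rewrite lval_fix; last by rewrite Q_head.
rewrite /lasso_next n_gt1 => /(congr1 (@nat_of_ord _)); rewrite !inordK //; lia.
Qed.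

End Lasso.

End PermutationRepresentations.

(** * Occurrences of x *)

Lemma split_first_x w :
  ~~ in_Fyz w -> exists u l v, [/\ w = u ++ l :: v, in_Fyz u & l.1 = gx].
Proof.
elim: w => //= l w IH; have [El _ | Nl] := eqVneq l.1 gx; first by exists [::], l, w.
rewrite Nl => /IH [u [l' [v [-> u_Fyz El']]]].
by exists (l :: u), l', v; rewrite /= u_Fyz andbT.
Qed.

Lemma split_last_x w :
  ~~ in_Fyz w -> exists u l v, [/\ w = u ++ l :: v, l.1 = gx & in_Fyz v].
Proof.
rewrite -[in_Fyz w]all_rev => /split_first_x [u [l [v [E u_Fyz El]]]].
exists (rev v), l, (rev u); split; rewrite /in_Fyz ?all_rev //.
by rewrite -[w]revK E rev_cat rev_cons cat_rcons.
Qed.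

Lemma q2_no_two_x W u l v l' w :
  (forall (G : group) (c : G), quandle_q2 (wop W c)) ->
  W = u ++ l :: v ++ l' :: w -> reduced (l :: rcons v l') ->
  l.1 = gx -> l'.1 = gx -> in_Fyz u -> in_Fyz w -> False.
Proof.
move=> q2 EW C_red Hl Hl' u_Fyz w_Fyz; apply: (q2_x_in_subgroup q2).
have [Q [p [EC p_lt cyc join]]] := reduced_lasso_split C_red isT.
rewrite EW -(cat_rcons l') -cat_cons EC; apply: x_notin_subgroup_Fyz => //.
have Q_C : p = 0 -> Q = l :: rcons v l' by move=> p0; rewrite EC p0 take0 cats0.
apply: lasso_x_notin_subgroup => //.
- by move: C_red; rewrite EC => /reduced_catl.
- by case: p Q_C p_lt {EC cyc join} => [/(_ erefl) -> | p _]; rewrite /= ?size_rcons; lia.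
- move: (congr1 (nth (gx, false) ^~ 0) EC).
  by rewrite nth_cat (leq_ltn_trans _ p_lt) //= => <-.
- by move=> /Q_C ->; rewrite /= size_rcons /= nth_rcons ltnn eqxx.
Qed.

Theorem mainTheorem3 (W : word) :
  (forall (G : group) (c : G),
      quandle_q1 (wop W c) /\ quandle_q2 (wop W c)) ->
  exists (w : word) (eps : int),
    in_Fyz w /\ (eps = 1%R \/ eps = (-1)%R) /\
    feq W ([:: (gy, false)] ++ winv w ++ wgpow gy (- eps)%R
              ++ wgpow gx eps ++ w).
Proof.
move=> HW; have W'_red := reduce_reduced W; set W' := reduce W in W'_red.
have wop_reduce (G : group) (c a b : G) : wop W' c a b = wop W c a b.
  exact: weval_reduce.
have q1 (G : group) (c : G) : quandle_q1 (wop W' c).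
  by move=> a; rewrite wop_reduce; apply: (HW G c).1.
have q2 (G : group) (c : G) : quandle_q2 (wop W' c).
  by move=> a; apply: (eq_bij ((HW G c).2 a)) => b; rewrite wop_reduce.
have [u [[g e] [v [EW u_Fyz /= Eg]]]] := split_first_x (q2_has_x q2); subst g.
have [v_Fyz | /split_last_x [v1 [l' [w [Ev Hl' w_Fyz]]]]] := boolP (in_Fyz v).
  exists v, (if e then -1 else 1)%R; split=> //.
  split; first by case: (e); [right | left].
  rewrite /feq -/W' -(reducedK W'_red).
  by case: e EW => EW; apply: (q1_single_x q1 EW).
rewrite Ev in EW.
have C_red : reduced ((gx, e) :: rcons v1 l').
  by move: W'_red; rewrite EW -(cat_rcons l') -cat_cons => /reduced_catr /reduced_catl.
by case: (q2_no_two_x q2 EW C_red erefl Hl' u_Fyz w_Fyz).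
Qed.
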